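(* Let $\mathbf P\in\mathbb{R}^{n\times n}$ be symmetric positive definite and $\mathbf c\in\mathbb{R}^n$. Then $$\ell_{\mathbf c,\mathbf P}(\beta)<-1\quad\text{for all }\beta>\max\{\lambda_{\min}(\mathbf P)^{-1},\,1-\mathbf c^\top\mathbf c\}.$$
   Context: Let $\mathbf P=\mathbf V\mathbf D\mathbf V^\top$ be a spectral decomposition with $\mathbf V$ orthogonal and $\mathbf D$ diagonal with entries $\lambda_i=D_{ii}$; let $\bar{\mathbf c}=\mathbf V^\top\mathbf c$, $S(\bar{\mathbf c})=\{i:\bar c_i\ne0\}$, and $\lambda_{\min}(\mathbf P)$ the smallest eigenvalue of $\mathbf P$. For $\beta>\lambda_{\min}(\mathbf P)^{-1}$, $\ell_{\mathbf c,\mathbf P}(\beta)=-\beta-\sum_{i\in S(\bar{\mathbf c})}\bar c_i^2\frac{\lambda_i\beta}{\lambda_i\beta-1}$. *)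

From HB Require Import structures.
From mathcomp Require Import all_boot all_order all_algebra.
Set Implicit Arguments. Unset Strict Implicit. Unset Printing Implicit Defensive.
Import Order.TTheory GRing.Theory Num.Theory.
Local Open Scope ring_scope.

Definition sym_posdef (R : realFieldType) (n : nat) (P : 'M[R]_n) : Prop :=
  P^T = P /\ forall x : 'cV[R]_n, x != 0 -> 0 < (x^T *m P *m x) 0 0.

Definition spectral_decomp (R : realFieldType) (n : nat) (P V D : 'M[R]_n) : Prop :=
  [/\ V^T *m V = 1%:M, V *m V^T = 1%:M, is_diag_mx D & P = V *m D *m V^T].

Definition is_lambda_min (R : realFieldType) (n : nat) (P : 'M[R]_n) (lmin : R) : Prop :=
  eigenvalue P lmin /\ forall a, eigenvalue P a -> lmin <= a.

Definition ell (R : realFieldType) (n : nat) (V D : 'M[R]_n) (c : 'cV[R]_n) (beta : R) : R :=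
  let cbar := V^T *m c in
  - beta - \sum_(i < n | cbar i 0 != 0)
             (cbar i 0) ^+ 2 * ((D i i * beta) / (D i i * beta - 1)).

(** Every eigenvalue [λ_i] of [P] is at least [λ_min > 0], so for
    [β > λ_min^-1] each weight [λ_i β / (λ_i β - 1)] exceeds [1]. Hence the sum
    in [ℓ] dominates [Σ c̄_i^2 = c̄ᵀc̄ = cᵀc] (as [V] is orthogonal), giving
    [ℓ(β) ≤ -β - cᵀc], which is [< -1] as soon as [β > 1 - cᵀc]. *)
From mathcomp Require Import all_boot all_order all_algebra.
From mathcomp Require Import lra.
Set Implicit Arguments. Unset Strict Implicit. Unset Printing Implicit Defensive.
Import Order.TTheory GRing.Theory Num.Theory.
Local Open Scope ring_scope.

Lemma orthogonal_diag_eigenvalue (F : fieldType) (n : nat) (P V D : 'M[F]_n)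
    (i : 'I_n) :
  V^T *m V = 1%:M -> is_diag_mx D -> P = V *m D *m V^T -> eigenvalue P (D i i).
Proof.
move=> VTV /diag_mxP [d ->] PE; rewrite mxE eqxx mulr1n.
have VTP : V^T *m P = diag_mx d *m V^T by rewrite PE !mulmxA VTV mul1mx.
apply/eigenvalueP; exists (row i V^T).
  by rewrite -row_mul VTP mul_diag_mx; apply/rowP => j; rewrite !mxE.
apply/eqP => rowV0.
have := congr1 (fun M => (M *m V) 0 i) rowV0.
by rewrite /= -row_mul VTV mul0mx !mxE eqxx /= => /eqP; rewrite oner_eq0.
Qed.

Lemma posdef_eigenvalue_gt0 (R : realFieldType) (n : nat) (P : 'M[R]_n) (a : R) :
  sym_posdef P -> eigenvalue P a -> 0 < a.
Proof.
move=> [PT Ppos] /eigenvalueP [v vP v0].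
have vT0 : v^T != 0 by rewrite -trmx0 (inj_eq trmx_inj).
have := Ppos _ vT0.
rewrite trmxK -mulmxA -{1}PT -trmx_mul vP linearZ /= -scalemxAr mxE.
have vvT_ge0 : 0 <= (v *m v^T) 0 0.
  by rewrite mxE; apply: sumr_ge0 => j _; rewrite mxE -expr2 sqr_ge0.
move=> prod_gt0; rewrite ltNge; apply: contraTN prod_gt0 => a_le0.
by rewrite -leNgt mulr_le0_ge0.
Qed.

Lemma tr_mulmx_col (R : pzRingType) (n : nat) (x : 'cV[R]_n) :
  (x^T *m x) 0 0 = \sum_i x i 0 ^+ 2.
Proof. by rewrite mxE; apply: eq_bigr => i _; rewrite mxE. Qed.

Lemma orthogonal_tr_mulmx (R : comPzRingType) (n : nat) (V : 'M[R]_n)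
    (c : 'cV[R]_n) :
  V *m V^T = 1%:M -> (V^T *m c)^T *m (V^T *m c) = c^T *m c.
Proof. by move=> VVT; rewrite trmx_mul trmxK mulmxA -(mulmxA c^T) VVT mulmx1. Qed.

Lemma sum_sqr_le_weighted (R : realDomainType) (I : finType) (a w : I -> R) :
  (forall i, 1 <= w i) ->
  \sum_i a i ^+ 2 <= \sum_(i | a i != 0) a i ^+ 2 * w i.
Proof.
move=> w_ge1; rewrite [leRHS]big_mkcond /=; apply: ler_sum => i _.
case: eqP => [->|_] /=; first by rewrite expr0n.
exact: ler_peMr (sqr_ge0 _) (w_ge1 i).
Qed.

Lemma ge1_div_subr1 (R : realFieldType) (t : R) : 1 < t -> 1 <= t / (t - 1).
Proof. by move=> t_gt1; rewrite ler_pdivlMr ?subr_gt0 // mul1r; lra. Qed.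

Lemma ell_le_sub_norm (R : realFieldType) (n : nat) (V D : 'M[R]_n)
    (c : 'cV[R]_n) (beta : R) :
  V *m V^T = 1%:M -> (forall i, 1 < D i i * beta) ->
  ell V D c beta <= - beta - (c^T *m c) 0 0.
Proof.
move=> VVT Dbeta_gt1; rewrite /ell lerD2l lerN2.
rewrite -(orthogonal_tr_mulmx c VVT) tr_mulmx_col.
by apply: sum_sqr_le_weighted => i; apply: ge1_div_subr1.
Qed.

Theorem proposition2 (R : realFieldType) (n : nat) (P V D : 'M[R]_n)
    (c : 'cV[R]_n) (lmin : R) :
  sym_posdef P -> spectral_decomp P V D -> is_lambda_min P lmin ->
  forall beta : R, Num.max lmin^-1 (1 - (c^T *m c) 0 0) < beta ->
    ell V D c beta < -1.
Proof.
move=> Ppd [VTV VVT Ddiag PE] [lmin_eig lmin_le] beta.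
rewrite gt_max => /andP [lmin_lt beta_gt].
have lmin_gt0 : 0 < lmin := posdef_eigenvalue_gt0 Ppd lmin_eig.
have Dbeta_gt1 i : 1 < D i i * beta.
  have le_lmin := lmin_le _ (orthogonal_diag_eigenvalue i VTV Ddiag PE).
  have D_gt0 : 0 < D i i := lt_le_trans lmin_gt0 le_lmin.
  rewrite -(mulfV (lt0r_neq0 D_gt0)) ltr_pM2l //.
  by apply: le_lt_trans lmin_lt; rewrite lef_pV2 ?posrE.
apply: le_lt_trans (ell_le_sub_norm c VVT Dbeta_gt1) _; lra.
Qed.
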